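(* Let $R$ be a commutative strongly purified ring. Then $R$ is a purified ring, and every pure ideal of $R$ is a regular ideal.
   Context: A regular ideal is an ideal generated by a set of idempotents. $R$ is strongly purified if for each $f\in R$ there is $n\geq1$ such that $\operatorname{Ann}(f^n)$ is a regular ideal. $R$ is purified if for any distinct minimal prime ideals $\mathfrak p,\mathfrak q$ of $R$ there is an idempotent $e\in\mathfrak p$ with $1-e\in\mathfrak q$. An ideal $I$ is pure if for each $f\in I$ there is $g\in I$ with $f(1-g)=0$. *)

From mathcomp Require Import all_boot all_algebra.
Set Implicit Arguments. Unset Strict Implicit. Unset Printing Implicit Defensive.
Import GRing.Theory.
Local Open Scope ring_scope.

Section Defs.
Variable R : comPzRingType.

Definition subsetR (A B : R -> Prop) : Prop := forall x, A x -> B x.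

Definition is_ideal (I : R -> Prop) : Prop :=
  [/\ I 0, (forall x y, I x -> I y -> I (x + y)) & (forall r x, I x -> I (r * x))].

Definition idempotent (e : R) : Prop := e * e = e.

Definition ideal_gen (S : R -> Prop) : R -> Prop :=
  fun x => forall J, is_ideal J -> subsetR S J -> J x.

Definition regular_ideal (I : R -> Prop) : Prop :=
  exists S : R -> Prop, (forall e, S e -> idempotent e) /\
    (forall x, I x <-> ideal_gen S x).

Definition Ann (f : R) : R -> Prop := fun x => x * f = 0.

Definition strongly_purified : Prop :=
  forall f : R, exists n : nat, (1 <= n)%N /\ regular_ideal (Ann (f ^+ n)).

Definition prime_ideal (P : R -> Prop) : Prop :=
  [/\ is_ideal P, ~ P 1 & forall a b, P (a * b) -> P a \/ P b].

Definition minimal_prime (P : R -> Prop) : Prop :=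
  prime_ideal P /\ forall Q, prime_ideal Q -> subsetR Q P -> subsetR P Q.

(* distinct = not equal as sets of elements *)
Definition purified : Prop :=
  forall p q : R -> Prop, minimal_prime p -> minimal_prime q ->
    ~ (forall x, p x <-> q x) ->
    exists e : R, idempotent e /\ p e /\ q (1 - e).

Definition pure_ideal (I : R -> Prop) : Prop :=
  forall f, I f -> exists g, I g /\ f * (1 - g) = 0.

End Defs.

(* In a strongly purified ring, an element [x] killed by [f] is fixed by an
   idempotent [e] killed by a power of [f]: [x] lies in the regular ideal
   [Ann (f ^+ n)], and a regular ideal is exactly an ideal in which every
   element is fixed by one of its idempotents.  For a pure ideal [I] and
   [x * (1 - g) = 0] with [g] in [I], this idempotent lies in [I], so [I] is
   regular.  For a prime [P], the same device shows that the elements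
   [x] with [s * x ^+ k = 0] for some [s] outside [P] form a prime ideal
   inside [P]; hence for a minimal prime [p] every [x] in [p] is such an
   element.  If [x] lies in [p] but not in the minimal prime [q], the
   idempotent [e] obtained from [s * x ^+ k = 0] lies in [q] but not in [p],
   and [1 - e] separates [p] from [q]. *)
From Pilot Require Import Defs.
From mathcomp Require Import all_boot all_algebra ring.
From Stdlib Require Import Classical.
Import Pilot.Defs.
Set Implicit Arguments. Unset Strict Implicit. Unset Printing Implicit Defensive.
Import GRing.Theory.
Local Open Scope ring_scope.

Section PurifiedRings.
Variable R : comPzRingType.
Implicit Types (e f g s x y z : R) (I J K P : R -> Prop).

Lemma idempotent1B e : idempotent e -> idempotent (1 - e).
Proof.
by rewrite /idempotent => ee; rewrite mulrBr mulr1 mulrBl mul1r ee subrr subr0.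
Qed.

Lemma idempotentM e f : idempotent e -> idempotent f -> idempotent (e * f).
Proof. by rewrite /idempotent => ee ff; rewrite mulrACA ee ff. Qed.

Lemma mul1B_fixed x e : x * e = x -> x * (1 - e) = 0.
Proof. by move=> xe; rewrite mulrBr mulr1 xe subrr. Qed.

Lemma ideal_gen_ideal (S : R -> Prop) : is_ideal (ideal_gen S).
Proof.
split=> [J [] // | x y gx gy J IJ SJ | r x gx J IJ SJ].
- by case: IJ (IJ) => _ JD _ /[dup] /gx /(_ SJ) Jx /gy /(_ SJ); exact: JD.
- by case: IJ (IJ) => _ _ JM /gx /(_ SJ); exact: JM.
Qed.

Definition fixed_by_idempotent K x : Prop :=
  exists e, [/\ idempotent e, K e & x * e = x].

Lemma fixed_by_idempotent_ideal K :
  is_ideal K -> is_ideal (fixed_by_idempotent K).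
Proof.
case=> K0 KD KM; split.
- by exists 0; rewrite /idempotent !mulr0.
- move=> x y [e1 [ie1 Ke1 xe1]] [e2 [ie2 Ke2 ye2]].
  (* the join of [e1] and [e2] in the Boolean algebra of idempotents *)
  exists (1 - (1 - e1) * (1 - e2)); split.
  + by apply: idempotent1B; apply: idempotentM; apply: idempotent1B.
  + rewrite (_ : 1 - _ = e1 + (1 - e1) * e2); last by ring.
    by apply: KD => //; apply: KM.
  + have join_fixed (w a b : R) : w * a = w -> w * (1 - (1 - a) * (1 - b)) = w.
      by move=> wa; rewrite mulrBr mulr1 mulrA (mul1B_fixed wa) mul0r subr0.
    by rewrite mulrDl join_fixed // (mulrC (1 - e1)) join_fixed.
- by move=> r x [e [ie Ke xe]]; exists e; split=> //; rewrite -mulrA xe.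
Qed.

Lemma regular_ideal_fixed I :
  regular_ideal I -> subsetR I (fixed_by_idempotent I).
Proof.
move=> [S [Sidem defI]] x /defI gx.
have IS e : S e -> fixed_by_idempotent (ideal_gen S) e.
  move=> Se; exists e; split; [exact: Sidem | | exact: Sidem].
  by move=> J _ SJ; exact: SJ.
have [e [ie /defI Ie xe]] :=
  gx _ (fixed_by_idempotent_ideal (ideal_gen_ideal S)) IS.
by exists e.
Qed.

Lemma regular_ideal_of_fixed I :
  is_ideal I -> subsetR I (fixed_by_idempotent I) -> regular_ideal I.
Proof.
move=> II fixI; exists (fun e => idempotent e /\ I e); split=> [e [] // | x].
split=> [/fixI [e [ie Ie <-]] J [_ _ JM] SJ | gx].
  exact/JM/SJ.
by apply: gx => // e [].
Qed.

Lemma strongly_purified_fixed x f : strongly_purified R -> x * f = 0 ->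
  exists e n, [/\ idempotent e, e * f ^+ n = 0 & x * e = x].
Proof.
move=> sp xf; have [n [n_gt0 reg]] := sp f.
have Ann_x : Ann (f ^+ n) x by rewrite /Ann -(prednK n_gt0) exprS mulrA xf mul0r.
by have [e [ie fe xe]] := regular_ideal_fixed reg Ann_x; exists e, n.
Qed.

Lemma ideal_1B_expr I g n : is_ideal I -> I g -> I (1 - (1 - g) ^+ n).
Proof.
case=> _ _ IM Ig.
by rewrite -{1}(expr1n R n) subrXX subKr mulrC; apply: IM.
Qed.

Lemma pure_ideal_regular I :
  strongly_purified R -> is_ideal I -> pure_ideal I -> regular_ideal I.
Proof.
move=> sp II pI; apply: regular_ideal_of_fixed => // x /pI [g [Ig xg]].
have [e [n [ie en xe]]] := strongly_purified_fixed sp xg.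
exists e; split=> //.
have := ideal_1B_expr n II Ig; case: II => _ _ IM /(IM e).
by rewrite mulrBr mulr1 en subr0.
Qed.

Lemma mul_exprD_eq0 a y z k l :
  a * y ^+ k = 0 -> a * z ^+ l = 0 -> a * (y + z) ^+ (k + l) = 0.
Proof.
move=> ayk azl; rewrite exprDn mulr_sumr big1 // => i _.
rewrite mulrnAr (_ : a * _ = 0) ?mul0rn //.
case: (leqP l i) => [li | il].
  by rewrite -(subnK li) exprD mulrC -!mulrA (mulrC _ a) azl !mulr0.
by rewrite -(addnBA _ (ltnW il)) exprD !mulrA ayk !mul0r.
Qed.

Lemma prime_ideal_expr P x k : prime_ideal P -> P (x ^+ k) -> P x.
Proof.
case=> _ P1 Pmul; elim: k => [|k IH]; first by rewrite expr0 => /P1.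
by rewrite exprS => /Pmul [].
Qed.

Lemma prime_ideal_idempotent1B P e : prime_ideal P -> idempotent e ->
  P (1 - e) <-> ~ P e.
Proof.
case=> [[P0 PD _] P1 Pmul] ie; split=> [P1e Pe | nPe].
  by apply: P1; rewrite -(subrK e 1); apply: PD.
have : P (e * (1 - e)) by rewrite mulrBr mulr1 ie subrr.
by case/Pmul.
Qed.

(* [local_nilradical P] is the preimage in [R] of the nilradical of the
   localization at [P]. *)
Definition local_nilradical P x : Prop :=
  exists s k, ~ P s /\ s * x ^+ k = 0.

Lemma local_nilradical_sub P :
  prime_ideal P -> subsetR (local_nilradical P) P.
Proof.
move=> pP x [s [k [nPs sx]]].
have [[P0 _ _] _ Pmul] := pP.
have : P (s * x ^+ k) by rewrite sx.
by case/Pmul=> // /prime_ideal_expr; apply.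
Qed.

Lemma local_nilradical_ideal P :
  prime_ideal P -> is_ideal (local_nilradical P).
Proof.
case=> _ P1 Pmul; split.
- by exists 1, 1%N; rewrite expr1 mulr0.
- move=> x y [s [k [nPs sx]]] [t [l [nPt ty]]].
  exists (s * t), (k + l)%N; split; first by case/Pmul.
  by apply: mul_exprD_eq0; [rewrite mulrAC sx mul0r | rewrite -mulrA ty mulr0].
- move=> r x [s [k [nPs sx]]]; exists s, k; split=> //.
  by rewrite exprMn mulrCA sx mulr0.
Qed.

Lemma local_nilradical_prime P : strongly_purified R -> prime_ideal P ->
  prime_ideal (local_nilradical P).
Proof.
move=> sp pP; have [[P0 _ _] _ Pmul] := pP.
split; first exact: local_nilradical_ideal.
  by case=> s [k [nPs]]; rewrite expr1n mulr1 => s0; apply: nPs; rewrite s0.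
move=> x y [s [k [nPs sxy]]].
have [e [n [ie ex sye]]] : exists e n,
    [/\ idempotent e, e * (x ^+ k) ^+ n = 0 & s * y ^+ k * e = s * y ^+ k].
  by apply: (strongly_purified_fixed sp); rewrite -mulrA -exprMn (mulrC y).
have [Pe | nPe] := classic (P e); last first.
  by left; exists e, (k * n)%N; rewrite exprM.
right; exists (s * (1 - e)), k; split.
  by case/Pmul=> // /(prime_ideal_idempotent1B pP ie); apply.
by rewrite mulrAC mul1B_fixed.
Qed.

Lemma minimal_prime_sub_local_nilradical P : strongly_purified R ->
  minimal_prime P -> subsetR P (local_nilradical P).
Proof.
move=> sp [pP minP]; apply: minP.
- exact: local_nilradical_prime.
- exact: local_nilradical_sub.
Qed.

Lemma minimal_prime_not_subset p q : prime_ideal p -> minimal_prime q ->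
  ~ (forall x, p x <-> q x) -> exists x, p x /\ ~ q x.
Proof.
move=> pp [_ minq] npq; apply: NNPP => nx; apply: npq => x.
have pq : subsetR p q by move=> y py; apply: NNPP => nqy; apply: nx; exists y.
by split; [exact: pq | exact: minq].
Qed.

Lemma strongly_purified_purified : strongly_purified R -> purified R.
Proof.
move=> sp p q mp mq npq; have [pp _] := mp; have [pq _] := mq.
have [x [px nqx]] := minimal_prime_not_subset pp mq npq.
have [s [k [nps sx]]] := minimal_prime_sub_local_nilradical sp mp px.
have [e [n [ie ex se]]] := strongly_purified_fixed sp sx.
have npe : ~ p e.
  by case: pp => -[_ _ pM] _ _ pe; apply: nps; rewrite -se; exact: pM.
have qe : q e.
  have [[q0 _ _] _ qmul] := pq; have : q (e * (x ^+ k) ^+ n) by rewrite ex.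
  by case/qmul=> // /(prime_ideal_expr pq) /(prime_ideal_expr pq).
exists (1 - e); split; first exact: idempotent1B.
by rewrite subKr prime_ideal_idempotent1B.
Qed.

End PurifiedRings.

Theorem theorem5p10 (R : comPzRingType) :
  strongly_purified R ->
  purified R /\
  (forall I : R -> Prop, is_ideal I -> pure_ideal I -> regular_ideal I).
Proof.
move=> sp; split; first exact: strongly_purified_purified.
by move=> I; apply: pure_ideal_regular.
Qed.
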